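(* Let $d$ be an even positive integer and $s$ a positive integer with $2s\leqslant d$, and let $k\in\{1,2,\ldots,s-1\}$. Then the indexed family $\{B_\varepsilon\colon \varepsilon\in I^s,\ |\varepsilon|=k\}$ defines a partition of $X_k$; that is, the union of its members is $X_k$ and $B_\varepsilon\cap B_\gamma=\emptyset$ whenever $\varepsilon\neq\gamma$ (empty members allowed).
   Context: Let $I=\{0,1\}$; for a binary vector $x$ let $|x|=\sum_i x_i$. Let $\alpha=(0,\ldots,0)$, $\omega=(1,\ldots,1)\in I^s$. For $\varepsilon\in I^s\setminus\{\alpha,\omega\}$ let $i=t(\varepsilon)$ be the unique index with $\varepsilon_i\neq\varepsilon_{i+1}=\cdots=\varepsilon_s$, and $A_\varepsilon=\{\varepsilon_1\}\times\cdots\times\{\varepsilon_i\}\times I^{s-1-i}\subseteq I^{s-1}$. Define subsets of $I^{d-s}$: $X_0=\{x\colon |x|\leqslant \frac d2-s\}$; $X_k=\{x\colon |x|=\frac d2-s+k\}$ for $0<k<s$; $X_s=\{x\colon |x|\geqslant \frac d2\}$. Writing $x\in I^{d-s}$ as $x=(x',x'')\in I^{d-2s+1}\times I^{s-1}$, for $\varepsilon\in I^s\setminus\{\alpha,\omega\}$ set $B_\varepsilon=\{x=(x',x'')\in X_{|\varepsilon|}\colon x''\in A_\varepsilon\}=X_{|\varepsilon|}\cap(I^{d-2s+1}\times A_\varepsilon)$. *)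

(* Binary vectors in I^n are n.-tuple bool; the paper's
   1-based coordinate eps_i is  nth false eps (i-1). *)
From mathcomp Require Import all_boot.
Unset Printing Implicit Defensive.

Definition wt n (x : n.-tuple bool) : nat := count id x.

(* is_t eps i : i (1-based) satisfies eps_i <> eps_{i+1} = ... = eps_s *)
Definition is_t s (e : s.-tuple bool) (i : nat) : bool :=
  [&& 0 < i, i < s, nth false e i.-1 != nth false e i &
      [forall j : 'I_s, (i <= j) ==> (nth false e j == nth false e s.-1)]].

(* A_eps = {eps_1} x ... x {eps_i} x I^(s-1-i) with i = t(eps), as a subset of I^(s-1).
   (For eps in {alpha, omega} no such i exists and A_eps is empty; it is never used.) *)
Definition Aset s (e : s.-tuple bool) : {set (s.-1).-tuple bool} :=
  [set y : (s.-1).-tuple bool |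
     [exists i : 'I_s, is_t s e i &&
        [forall j : 'I_s.-1, (j < i) ==> (nth false y j == nth false e j)]]].

Definition Xset d s k : {set (d - s).-tuple bool} :=
  [set x : (d - s).-tuple bool |
     if k == 0 then wt (d - s) x <= d./2 - s
     else if k < s then wt (d - s) x == d./2 - s + k
     else if k == s then d./2 <= wt (d - s) x
     else false].

(* x'' : last s-1 coordinates of x = (x', x'') in I^(d-2s+1) x I^(s-1) *)
Definition xpp d s (x : (d - s).-tuple bool) : (s.-1).-tuple bool :=
  [tuple nth false x (d - 2 * s + 1 + j) | j < s.-1].

Definition Bset d s (e : s.-tuple bool) : {set (d - s).-tuple bool} :=
  [set x in Xset d s (wt s e) | xpp d s x \in Aset s e].

(* For y = x'' in I^(s-1), the vectors e with y in A_e are exactly the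
   completions of y at some i in [1, s-1]: e = (y_1, ..., y_i, ~y_i, ..., ~y_i).
   Such a completion has weight c_i if y_i = 1 and s - z_i if y_i = 0, where
   c_i and z_i count the ones and the zeros among y_1, ..., y_i.  These s - 1
   weights are pairwise distinct and lie in [1, s-1], so each weight k in
   [1, s-1] is attained by exactly one e with y in A_e: the sets B_e of weight
   k partition X_k. *)
From mathcomp Require Import all_boot.
From mathcomp Require Import zify.

Set Implicit Arguments.
Unset Strict Implicit.

Lemma count_take_le (y : seq bool) i : count id (take i y) <= i.
Proof. by apply: leq_trans (count_size _ _) _; rewrite size_take; case: ifP; lia. Qed.

Section Completion.

Variable y : seq bool.

Local Notation n := (size y).

Definition completion (i : nat) : seq bool :=
  take i y ++ nseq (n.+1 - i) (~~ nth false y i.-1).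

Definition cweight (i : nat) : nat := count id (completion i).

Lemma size_completion i : i <= n -> size (completion i) = n.+1.
Proof. by move=> le_in; rewrite size_cat size_takel // size_nseq; lia. Qed.

Lemma nth_completion i j : i <= n ->
  nth false (completion i) j =
  if j < i then nth false y j else if j <= n then ~~ nth false y i.-1 else false.
Proof.
move=> le_in; rewrite nth_cat size_takel //; case: ltnP => [lt_ji|le_ij].
  by rewrite nth_take.
by rewrite nth_nseq; do 2 case: ifP => //; lia.
Qed.

Lemma count_take_nth i : i < n ->
  count id (take i.+1 y) = count id (take i y) + nth false y i.
Proof. by move=> lt_in; rewrite (take_nth false) // -cats1 count_cat /= addn0. Qed.

Lemma count_take_mono i j : i <= j ->
  count id (take i y) <= count id (take j y) <= count id (take i y) + (j - i).
Proof.
move=> le_ij; rewrite -(subnKC le_ij) takeD count_cat leq_addr /= subnKC //.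
by rewrite leq_add2l count_take_le.
Qed.

Lemma cweightE i : i <= n ->
  cweight i = count id (take i y) + (~~ nth false y i.-1) * (n.+1 - i).
Proof. by move=> le_in; rewrite /cweight count_cat count_nseq mulnC. Qed.

Lemma cweight_bounds i : 0 < i <= n -> 0 < cweight i <= n.
Proof.
case: i => // i /= lt_in; rewrite cweightE //=.
have := count_take_nth lt_in; have := count_take_le y i.
by case: (nth false y i) => /=; lia.
Qed.

Lemma cweight_neq i j : 0 < i -> i < j -> j <= n -> cweight i != cweight j.
Proof.
case: i => // i _; case: j => // j lt_ij lt_jn.
have lt_in : i < n := ltn_trans (lt_ij : i < j) lt_jn.
rewrite !cweightE //=.
have := count_take_nth lt_jn; have := count_take_nth lt_in.
have := @count_take_mono i.+1 j lt_ij.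
by case: (nth false y i); case: (nth false y j) => /=; lia.
Qed.

Lemma cweight_inj i j : 0 < i <= n -> 0 < j <= n -> cweight i = cweight j -> i = j.
Proof.
move=> /andP [i_gt0 le_in] /andP [j_gt0 le_jn] eq_w.
case: (ltngtP i j) => // [lt_ij|lt_ji].
  by move: (cweight_neq i_gt0 lt_ij le_jn); rewrite eq_w eqxx.
by move: (cweight_neq j_gt0 lt_ji le_in); rewrite eq_w eqxx.
Qed.

(* Pigeonhole: n distinct values in [1, n]. *)
Lemma cweight_onto k : 0 < k <= n -> exists2 i, 0 < i <= n & cweight i = k.
Proof.
move=> k_range.
have in_range i : (i \in iota 1 n) = (0 < i <= n) by rewrite mem_iota; lia.
have uniq_w : uniq (map cweight (iota 1 n)).
  rewrite map_inj_in_uniq ?iota_uniq // => i j.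
  by rewrite !in_range; apply: cweight_inj.
have sub_w : {subset map cweight (iota 1 n) <= iota 1 n}.
  by move=> _ /mapP [i i_range ->]; rewrite in_range cweight_bounds -?in_range.
have [_ eq_w] := uniq_min_size uniq_w sub_w (eq_leq (esym (size_map _ _))).
have /mapP [i i_range ->] : k \in map cweight (iota 1 n) by rewrite eq_w in_range.
by exists i; rewrite -?in_range.
Qed.

End Completion.

Lemma mem_Aset n (e : n.+1.-tuple bool) (y : n.-tuple bool) :
  y \in Aset n.+1 e <-> exists2 i, 0 < i <= n & val e = completion y i.
Proof.
have size_y : size y = n by rewrite size_tuple.
split.
  rewrite inE => /existsP [[i lt_is] /andP [/and4P [i_gt0 _ e_jump /forallP e_tail]]].
  move=> /forallP e_head.
  have le_in : i <= n by [].
  have e_y j : j < i -> nth false e j = nth false y j.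
    by move=> lt_ji; have /implyP/(_ lt_ji)/eqP := e_head (Ordinal (leq_trans lt_ji le_in)).
  have e_end j : i <= j <= n -> nth false e j = nth false e n.
    by case/andP=> le_ij lt_jn; have /implyP/(_ le_ij)/eqP := e_tail (Ordinal (lt_jn : j < n.+1)).
  exists i; first by rewrite i_gt0.
  apply: (@eq_from_nth _ false); first by rewrite size_completion ?size_tuple ?size_y.
  move=> j; rewrite size_tuple => lt_jn; rewrite nth_completion ?size_y //.
  case: ltnP => [/e_y //|le_ij]; rewrite (lt_jn : j <= n) e_end ?le_ij //.
  move: e_jump; rewrite e_y ?prednK // e_end ?leqnn ?le_in //.
  by case: (nth false e n); case: (nth false y i.-1).
case=> i /andP [i_gt0 le_in] e_def.
have nth_e j : nth false e j = nth false (completion y i) j by rewrite e_def.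
rewrite inE; apply/existsP; exists (Ordinal (le_in : i < n.+1)).
apply/andP; split; last first.
  by apply/forallP => j; apply/implyP => lt_ji; rewrite nth_e nth_completion ?size_y ?lt_ji.
rewrite /is_t /= i_gt0 ltnS !nth_e !nth_completion ?size_y // ltnn prednK //.
rewrite (leq_gtF le_in) le_in !leqnn /=.
apply/andP; split; first by case: (nth false y i.-1).
apply/forallP => j; apply/implyP => le_ij.
by rewrite nth_e nth_completion ?size_y // ltnNge le_ij /= -ltnS ltn_ord.
Qed.

Lemma wt_completion n (e : n.+1.-tuple bool) (y : n.-tuple bool) i :
  val e = completion y i -> wt n.+1 e = cweight y i.
Proof. by rewrite /wt /cweight => ->. Qed.

Lemma Aset_exists_wt n (y : n.-tuple bool) k : 0 < k <= n ->
  exists2 e : n.+1.-tuple bool, wt n.+1 e = k & y \in Aset n.+1 e.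
Proof.
move=> k_range; have /cweight_onto [i i_range w_i] : 0 < k <= size y.
  by rewrite size_tuple.
have size_c : size (completion y i) == n.+1.
  by case/andP: i_range => _ le_in; rewrite size_completion // size_tuple.
exists (Tuple size_c); first by rewrite (@wt_completion _ _ y i).
by apply/mem_Aset; exists i; rewrite -?(size_tuple y).
Qed.

Lemma Aset_wt_inj n (y : n.-tuple bool) (e g : n.+1.-tuple bool) :
  y \in Aset n.+1 e -> y \in Aset n.+1 g -> wt n.+1 e = wt n.+1 g -> e = g.
Proof.
move=> /mem_Aset [i i_range e_def] /mem_Aset [j j_range g_def].
rewrite (wt_completion e_def) (wt_completion g_def) => /cweight_inj eq_ij.
by apply: val_inj; rewrite e_def g_def eq_ij // size_tuple.
Qed.

Lemma mem_Bset d s (e : s.-tuple bool) x :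
  (x \in Bset d s e) = (x \in Xset d s (wt s e)) && (xpp d s x \in Aset s e).
Proof. by rewrite [LHS]inE. Qed.

Theorem corollary1 (d s k : nat) :
  0 < d -> ~~ odd d -> 0 < s -> 2 * s <= d -> 0 < k -> k < s ->
  (\bigcup_(e : s.-tuple bool | wt s e == k) Bset d s e = Xset d s k) /\
  (forall e g : s.-tuple bool, wt s e = k -> wt s g = k -> e <> g ->
     Bset d s e :&: Bset d s g = set0).
Proof.
move=> _ _ s_gt0 _ k_gt0 lt_ks.
case: s s_gt0 lt_ks => [//|n] _ lt_kn; split.
  apply/setP => x; apply/bigcupP/idP => [[e /eqP <-]|x_in_X].
    by rewrite mem_Bset => /andP [].
  have k_range : 0 < k <= n by rewrite k_gt0.
  have [e w_e y_in_A] := Aset_exists_wt (xpp d n.+1 x) k_range.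
  by exists e; rewrite ?w_e // mem_Bset w_e x_in_X.
move=> e g w_e w_g neq_eg; apply/setP => x; rewrite in_setI in_set0 !mem_Bset.
apply/negP => /andP [/andP [_ y_in_Ae] /andP [_ y_in_Ag]].
by apply: neq_eg; apply: (Aset_wt_inj y_in_Ae y_in_Ag); rewrite w_e w_g.
Qed.
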